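(* Let $(X,d)$ be a compact metric space with the $E_{1,0}$-property. Then the intrinsic distance $d_I:X\times X\to\mathbb{R}$ is well defined (finite-valued) and continuous.
   Context: $(X,d)$ has the $E_{1,0}$-property if for every nonempty open $\Omega\subsetneq X$ there is a continuous $u:\overline\Omega\to\mathbb{R}$ with $s[u](x)=1$ for all $x\in\Omega$ and $u=0$ on $\partial\Omega$, where the local slope is $s[u](\bar x):=\limsup_{x\to\bar x}\frac{\max\{u(\bar x)-u(x),0\}}{d(\bar x,x)}$ (zero if $\bar x$ isolated), computed in $\overline\Omega$. The intrinsic distance $d_I(x,y)$ is the infimum of lengths of continuous curves joining $x$ and $y$ (length $=\sup\sum_i d(\gamma(t_i),\gamma(t_{i+1}))$ over partitions), with $\inf\emptyset=+\infty$. *)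

From Stdlib Require Import Reals Lra ClassicalEpsilon List.
From Coquelicot Require Import Coquelicot.
Open Scope R_scope.

Section Metric.
Variable X : Type.
Variable d : X -> X -> R.

Definition is_metric : Prop :=
  (forall x y, 0 <= d x y) /\ (forall x y, d x y = 0 <-> x = y) /\
  (forall x y, d x y = d y x) /\ (forall x y z, d x z <= d x y + d y z).

Definition mopen (U : X -> Prop) : Prop :=
  forall x, U x -> exists r, 0 < r /\ forall y, d x y < r -> U y.

Definition mcompact : Prop :=
  forall (I : Type) (U : I -> X -> Prop),
    (forall i, mopen (U i)) -> (forall x, exists i, U i x) ->
    exists l : list I, forall x, exists i, In i l /\ U i x.

Definition closure (A : X -> Prop) (x : X) : Prop :=
  forall r, 0 < r -> exists y, A y /\ d x y < r.

Definition interior (A : X -> Prop) (x : X) : Prop :=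
  exists r, 0 < r /\ forall y, d x y < r -> A y.

Definition boundary (A : X -> Prop) (x : X) : Prop :=
  closure A x /\ ~ interior A x.

Definition continuous_on (A : X -> Prop) (u : X -> R) : Prop :=
  forall x, A x -> forall eps, 0 < eps -> exists delta, 0 < delta /\
    forall y, A y -> d x y < delta -> Rabs (u y - u x) < eps.

Definition isolated_in (A : X -> Prop) (x : X) : Prop :=
  exists r, 0 < r /\ forall y, A y -> ~ (0 < d x y < r).

Definition slope_sup (A : X -> Prop) (u : X -> R) (xb : X) (r : R) : Rbar :=
  Lub_Rbar (fun v => exists x, A x /\ 0 < d xb x < r /\
                       v = Rmax (u xb - u x) 0 / d xb x).

Definition local_slope (A : X -> Prop) (u : X -> R) (xb : X) : Rbar :=
  if excluded_middle_informative (isolated_in A xb) then Finite 0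
  else Rbar_glb (fun v => exists r, 0 < r /\ v = slope_sup A u xb r).

Definition E10_property : Prop :=
  forall Omega : X -> Prop,
    mopen Omega -> (exists x, Omega x) -> (exists x, ~ Omega x) ->
    exists u : X -> R,
      continuous_on (closure Omega) u /\
      (forall x, Omega x -> local_slope (closure Omega) u x = Finite 1) /\
      (forall x, boundary Omega x -> u x = 0).

Definition curve_continuous (a b : R) (g : R -> X) : Prop :=
  forall t, a <= t <= b -> forall eps, 0 < eps -> exists delta, 0 < delta /\
    forall s, a <= s <= b -> Rabs (s - t) < delta -> d (g t) (g s) < eps.

Fixpoint psum (g : R -> X) (t : nat -> R) (n : nat) : R :=
  match n with
  | O => 0
  | S k => psum g t k + d (g (t k)) (g (t (S k)))
  end.

Definition partition (a b : R) (t : nat -> R) (n : nat) : Prop :=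
  t O = a /\ t n = b /\ forall i, (i < n)%nat -> t i <= t (S i).

Definition curve_length (a b : R) (g : R -> X) : Rbar :=
  Lub_Rbar (fun s => exists t n, partition a b t n /\ s = psum g t n).

(* intrinsic distance: inf of lengths of continuous curves joining x, y;
   inf of the empty set is +oo (curves of infinite length do not affect the inf) *)
Definition dI (x y : X) : Rbar :=
  Glb_Rbar (fun l => exists a b (g : R -> X), a <= b /\ curve_continuous a b g /\
              g a = x /\ g b = y /\ curve_length a b g = Finite l).

End Metric.

From Pilot Require Import Defs.
From Stdlib Require Import Reals Lra Lia List ClassicalEpsilon Classical.
From Coquelicot Require Import Coquelicot.
Open Scope R_scope.

(* Call L a chain bound from p to q if for every e > 0 some e-chain from p to q (finitely
   many points with consecutive distances < e) has total length at most L + e.  In a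
   compact space chain bounds are as good as lengths of curves: a chain bound L yields, by
   compactness, a point m with chain bound L/2 to both p and q, and iterating over the
   dyadic rationals gives an L-Lipschitz curve from p to q; conversely a curve of length l
   yields the chain bound l.  Hence dI p q <= L for every chain bound L, and
   dI x' y' <= dI x y + a + b when a and b are chain bounds from x to x' and y to y'.

   The E_{1,0}-property on Omega = X \ {x0} provides a continuous u with u x0 = 0 and
   slope 1 off x0, so from every z <> x0 there are arbitrarily short steps to points w
   with d z w < 4/3 (u z - u w).  Minimising u over the closure of the counterexamples
   shows that 2 u z is a chain bound from z to x0.  As u is continuous and vanishes at x0,
   points near x0 have small chain bounds to x0, which gives finiteness and continuity. *)

Lemma inv_succ_small (e : R) : 0 < e -> exists N, forall n, (N <= n)%nat -> / INR (S n) < e.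
Proof.
  intros He. destruct (archimed_cor1 e He) as [N [HN HN0]]. exists N. intros n Hn.
  apply Rle_lt_trans with (/ INR N); [|exact HN].
  apply Rinv_le_contravar; [now apply lt_0_INR|apply le_INR; lia].
Qed.

Lemma INR_pow2 n : INR (2 ^ n) = 2 ^ n.
Proof. rewrite pow_INR. reflexivity. Qed.

Lemma le_of_le_add_pow2 a b c : 0 <= c -> (forall n, a <= b + c / 2 ^ n) -> a <= b.
Proof.
  intros Hc H. apply Rle_plus_epsilon. intros e He.
  destruct (archimed_cor1 (e / (c + 1))) as [N [HN HN0]]; [apply Rdiv_lt_0_compat; lra|].
  specialize (H N).
  assert (HpowN : INR N < 2 ^ N) by (rewrite <- INR_pow2; apply lt_INR, Nat.pow_gt_lin_r; lia).
  assert (HN1 : 0 < INR N) by (now apply lt_0_INR).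
  assert (c / 2 ^ N <= c / INR N)
    by (apply Rmult_le_compat_l; [lra|apply Rinv_le_contravar; lra]).
  assert (c / INR N <= (c + 1) * / INR N).
  { apply Rmult_le_compat_r; [left; apply Rinv_0_lt_compat|]; lra. }
  assert ((c + 1) * / INR N < (c + 1) * (e / (c + 1))) by (apply Rmult_lt_compat_l; lra).
  replace ((c + 1) * (e / (c + 1))) with e in * by (field; lra).
  lra.
Qed.

Section MetricSpace.
Context {X : Type} (d : X -> X -> R) (Hmet : is_metric X d).

Lemma dist_ge0 x y : 0 <= d x y. Proof. apply Hmet. Qed.
Lemma dist_eq0 x y : d x y = 0 -> x = y. Proof. apply Hmet. Qed.
Lemma dist_xx x : d x x = 0. Proof. now apply Hmet. Qed.
Lemma dist_sym x y : d x y = d y x. Proof. apply Hmet. Qed.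
Lemma dist_triangle x y z : d x z <= d x y + d y z. Proof. apply Hmet. Qed.

Lemma closure_subset (B : X -> Prop) x : B x -> closure X d B x.
Proof. intros Bx r Hr. exists x. now rewrite dist_xx. Qed.

Lemma not_closure_ball (B : X -> Prop) z : ~ closure X d B z ->
  exists r, 0 < r /\ forall y, d z y < r -> ~ closure X d B y.
Proof.
  intros Hz. apply not_all_ex_not in Hz as [r Hr]. apply imply_to_and in Hr as [Hr Hfar].
  exists (r / 2). split; [lra|]. intros y Hy Hcl.
  destruct (Hcl (r / 2)) as [b [Hb Hyb]]; [lra|].
  apply Hfar. exists b. split; [exact Hb|]. pose proof (dist_triangle z y b). lra.
Qed.

Definition mcontinuous (u : X -> R) : Prop :=
  forall x eps, 0 < eps -> exists delta, 0 < delta /\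
    forall y, d x y < delta -> Rabs (u y - u x) < eps.

Lemma list_argmin (u : X -> R) (B : X -> Prop) (l : list X) :
  (exists b, In b l /\ B b) ->
  exists b, In b l /\ B b /\ forall i, In i l -> B i -> u b <= u i.
Proof.
  induction l as [|a l IH]; intros [b [Hb HBb]]; [destruct Hb|].
  destruct (classic (exists b, In b l /\ B b)) as [Hex|Hnex].
  - destruct (IH Hex) as [c [Hc [HBc Hmin]]].
    destruct (classic (B a /\ u a <= u c)) as [[HBa Hac]|Hca].
    + exists a. repeat split; [now left|exact HBa|].
      intros i [<-|Hi] HBi; [lra|]. specialize (Hmin i Hi HBi). lra.
    + exists c. repeat split; [now right|exact HBc|].
      intros i [<-|Hi] HBi; [|now apply Hmin].
      apply Rnot_lt_le. intros Hlt. apply Hca. split; [exact HBi|lra].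
  - destruct Hb as [->|Hb]; [|exfalso; eauto].
    exists b. repeat split; [now left|exact HBb|].
    intros i [<-|Hi] HBi; [lra|exfalso; eauto].
Qed.

Section Compact.
Hypothesis Hc : mcompact X d.

Lemma mcompact_cluster_point (s : nat -> X) :
  exists z, forall r, 0 < r -> forall N, exists n, (N <= n)%nat /\ d z (s n) < r.
Proof.
  apply NNPP. intros Hno.
  set (far := fun (N : nat) (y : X) =>
    exists r, 0 < r /\ forall n, (N <= n)%nat -> r <= d y (s n)).
  destruct (Hc nat far) as [l Hl].
  - intros N y [r [Hr Hy]]. exists (r / 2). split; [lra|].
    intros y' Hy'. exists (r / 2). split; [lra|]. intros n Hn.
    specialize (Hy n Hn). pose proof (dist_triangle y y' (s n)). lra.
  - intros y. apply NNPP. intros Hnear. apply Hno. exists y. intros r Hr N.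
    apply NNPP. intros Hfar. apply Hnear. exists N, r. split; [exact Hr|].
    intros n Hn. apply Rnot_lt_le. intros Hlt. apply Hfar. eauto.
  - destruct (Hl (s (list_max l))) as [N [HN [r [Hr Hfar]]]].
    assert (HNmax : (N <= list_max l)%nat).
    { pose proof (proj1 (list_max_le l _) (Nat.le_refl _)) as Hall.
      rewrite Forall_forall in Hall. exact (Hall N HN). }
    specialize (Hfar _ HNmax). rewrite dist_xx in Hfar. lra.
Qed.

Lemma mcompact_argmin_closure (u : X -> R) (B : X -> Prop) :
  mcontinuous u -> (exists b, B b) ->
  exists z, closure X d B z /\ forall b, B b -> u z <= u b.
Proof.
  (* Otherwise the sets [u > u i] (i in B) and the complement of the closure cover X, and a
     finite subcover is contradicted by its index in B minimising u. *)
  intros Hu [b0 Hb0]. apply NNPP. intros Hno.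
  assert (Hbelow : forall z, closure X d B z -> exists b, B b /\ u b < u z).
  { intros z Hz. apply NNPP. intros Hn. apply Hno. exists z. split; [exact Hz|].
    intros b Hb. apply Rnot_lt_le. intros Hlt. apply Hn. eauto. }
  set (U := fun i z => (B i /\ u i < u z) \/ (~ B i /\ ~ closure X d B z)).
  destruct (Hc X U) as [l Hl].
  - intros i z [[HBi Hiz]|[HBi Hz]].
    + destruct (Hu z (u z - u i)) as [delta [Hdelta Hy]]; [lra|].
      exists delta. split; [exact Hdelta|]. intros y Hzy. left. split; [exact HBi|].
      specialize (Hy y Hzy). apply Rabs_def2 in Hy. lra.
    + destruct (not_closure_ball B z Hz) as [r [Hr Hball]].
      exists r. split; [exact Hr|]. intros y Hy. right. auto.
  - intros z. destruct (classic (closure X d B z)) as [Hz|Hz].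
    + destruct (Hbelow z Hz) as [b [Hb Hbz]]. exists b. left. auto.
    + exists z. right. split; [|exact Hz]. intros HBz. now apply Hz, closure_subset.
  - assert (Hex : exists b, In b l /\ B b).
    { destruct (Hl b0) as [i [Hi [[HBi _]|[_ Hcl]]]]; [eauto|].
      exfalso. now apply Hcl, closure_subset. }
    destruct (list_argmin u B l Hex) as [b [Hb [HBb Hmin]]].
    destruct (Hl b) as [i [Hi [[HBi Hib]|[_ Hcl]]]].
    + specialize (Hmin i Hi HBi). lra.
    + now apply Hcl, closure_subset.
Qed.

End Compact.
End MetricSpace.

Section Chains.
Context {X : Type} (d : X -> X -> R) (Hmet : is_metric X d).

(* A chain from [p] is the list of its points after [p]. *)
Fixpoint chain_len (p : X) (l : list X) : R :=
  match l with nil => 0 | y :: l' => d p y + chain_len y l' end.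
Fixpoint chain_fine (e : R) (p : X) (l : list X) : Prop :=
  match l with nil => True | y :: l' => d p y < e /\ chain_fine e y l' end.
Fixpoint chain_end (p : X) (l : list X) : X :=
  match l with nil => p | y :: l' => chain_end y l' end.

Definition echain (e : R) (p q : X) (L : R) : Prop :=
  exists l, chain_fine e p l /\ chain_end p l = q /\ chain_len p l <= L.

Definition chain_bound (p q : X) (L : R) : Prop :=
  forall e, 0 < e -> echain e p q (L + e).

Lemma chain_len_app l1 : forall p l2,
  chain_len p (l1 ++ l2) = chain_len p l1 + chain_len (chain_end p l1) l2.
Proof. induction l1 as [|y l1 IH]; intros p l2; simpl; [lra|]. rewrite IH. lra. Qed.

Lemma chain_end_app l1 : forall p l2, chain_end p (l1 ++ l2) = chain_end (chain_end p l1) l2.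
Proof. induction l1 as [|y l1 IH]; intros p l2; simpl; auto. Qed.

Lemma chain_fine_app e l1 : forall p l2,
  chain_fine e p (l1 ++ l2) <-> chain_fine e p l1 /\ chain_fine e (chain_end p l1) l2.
Proof.
  induction l1 as [|y l1 IH]; intros p l2; simpl; [tauto|]. rewrite IH. tauto.
Qed.

Lemma chain_fine_le e e' l : forall p, e <= e' -> chain_fine e p l -> chain_fine e' p l.
Proof. induction l as [|y l IH]; intros p He; simpl; auto. intros [H1 H2]. split; auto; lra. Qed.

Lemma dist_le_chain_len l : forall p, d p (chain_end p l) <= chain_len p l.
Proof.
  induction l as [|y l IH]; intros p; simpl; [rewrite (dist_xx d Hmet); lra|].
  pose proof (IH y). pose proof (dist_triangle d Hmet p y (chain_end y l)). lra.
Qed.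

Lemma chain_len_ge0 l p : 0 <= chain_len p l.
Proof. pose proof (dist_le_chain_len l p). pose proof (dist_ge0 d Hmet p (chain_end p l)). lra. Qed.

Lemma chain_rev e l : forall p, chain_fine e p l -> exists l',
  chain_fine e (chain_end p l) l' /\ chain_end (chain_end p l) l' = p /\
  chain_len (chain_end p l) l' = chain_len p l.
Proof.
  induction l as [|y l IH]; intros p Hfine; [exists nil; simpl; auto|].
  destruct Hfine as [Hpy Hfine]. destruct (IH y Hfine) as [l' [Hf' [He' Hl']]].
  exists (l' ++ p :: nil). simpl. rewrite chain_fine_app, chain_end_app, chain_len_app, He'.
  simpl. rewrite (dist_sym d Hmet y p). repeat split; auto. lra.
Qed.

Lemma echain_trans e p q r L1 L2 : echain e p q L1 -> echain e q r L2 -> echain e p r (L1 + L2).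
Proof.
  intros [l1 [F1 [E1 L1']]] [l2 [F2 [E2 L2']]]. subst q.
  exists (l1 ++ l2). rewrite chain_fine_app, chain_end_app, chain_len_app.
  repeat split; auto. lra.
Qed.

Lemma echain_le e e' p q L L' : e <= e' -> L <= L' -> echain e p q L -> echain e' p q L'.
Proof.
  intros He HL [l [F [E Hl]]]. exists l. repeat split; auto; [|lra].
  eapply chain_fine_le; eauto.
Qed.

Lemma echain_step e p q : d p q < e -> echain e p q (d p q).
Proof. intros H. exists (q :: nil). simpl. repeat split; auto. lra. Qed.

Lemma echain_sym e p q L : echain e p q L -> echain e q p L.
Proof.
  intros [l [F [E Hl]]]. subst q. destruct (chain_rev e l p F) as [l' [F' [E' L']]].
  exists l'. repeat split; auto. lra.
Qed.

Lemma dist_le_echain e p q L : echain e p q L -> d p q <= L.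
Proof. intros [l [F [E Hl]]]. subst q. pose proof (dist_le_chain_len l p). lra. Qed.

Lemma chain_bound_refl p : chain_bound p p 0.
Proof. intros e He. exists nil. simpl. repeat split; auto. lra. Qed.

Lemma chain_bound_sym p q L : chain_bound p q L -> chain_bound q p L.
Proof. intros H e He. now apply echain_sym, H. Qed.

Lemma chain_bound_le p q L L' : L <= L' -> chain_bound p q L -> chain_bound p q L'.
Proof. intros HL H e He. apply echain_le with e (L + e); [lra|lra|now apply H]. Qed.

Lemma chain_bound_trans p q r L1 L2 :
  chain_bound p q L1 -> chain_bound q r L2 -> chain_bound p r (L1 + L2).
Proof.
  intros H1 H2 e He. apply echain_le with (e / 2) (L1 + e / 2 + (L2 + e / 2)); [lra|lra|].
  apply echain_trans with q; [apply H1|apply H2]; lra.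
Qed.

Lemma dist_le_chain_bound p q L : chain_bound p q L -> d p q <= L.
Proof.
  intros H. apply Rle_plus_epsilon. intros e He. exact (dist_le_echain _ _ _ _ (H e He)).
Qed.

Lemma chain_bound_ge0 p q L : chain_bound p q L -> 0 <= L.
Proof.
  intros H. pose proof (dist_le_chain_bound p q L H). pose proof (dist_ge0 d Hmet p q). lra.
Qed.

Lemma chain_split e l : 0 <= e -> forall p c, 0 <= c -> chain_fine e p l ->
  exists l1 l2, l = l1 ++ l2 /\ chain_len p l1 <= c /\
    Rmin c (chain_len p l) - e <= chain_len p l1.
Proof.
  intros He. induction l as [|y l IH]; intros p c Hc Hfine.
  - exists nil, nil. simpl. repeat split; [lra|]. unfold Rmin. destruct Rle_dec; lra.
  - destruct Hfine as [Hpy Hfine]. destruct (Rle_dec (d p y) c) as [Hle|Hgt].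
    + destruct (IH y (c - d p y)) as [l1 [l2 [-> [A B]]]]; [lra|exact Hfine|].
      exists (y :: l1), l2. simpl. repeat split; [lra|].
      revert B. unfold Rmin. repeat destruct Rle_dec; lra.
    + exists nil, (y :: l). simpl. repeat split; [lra|]. unfold Rmin. destruct Rle_dec; lra.
Qed.

Lemma echain_halve e p q L : 0 <= e -> echain e p q L ->
  exists m, echain e p m (L / 2) /\ echain e m q (L / 2 + e).
Proof.
  intros He [l [Hfine [Hend Hlen]]].
  assert (HL : 0 <= L) by (pose proof (chain_len_ge0 l p); lra).
  destruct (chain_split e l He p (L / 2)) as [l1 [l2 [-> [Hl1 Hl1']]]]; [lra|exact Hfine|].
  apply chain_fine_app in Hfine as [F1 F2].
  rewrite chain_len_app in Hlen, Hl1'. rewrite chain_end_app in Hend.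
  pose proof (chain_len_ge0 l1 p). pose proof (chain_len_ge0 l2 (chain_end p l1)).
  exists (chain_end p l1). split; [exists l1; auto|exists l2; repeat split; auto].
  revert Hl1'. unfold Rmin. destruct Rle_dec; lra.
Qed.

Lemma chain_bound_midpoint (Hc : mcompact X d) p q L : chain_bound p q L ->
  exists m, chain_bound p m (L / 2) /\ chain_bound m q (L / 2).
Proof.
  intros H.
  assert (Happrox : forall n : nat, exists m,
    echain (/ INR (S n)) p m ((L + / INR (S n)) / 2) /\
    echain (/ INR (S n)) m q ((L + / INR (S n)) / 2 + / INR (S n))).
  { intros n. pose proof (RinvN_pos n) as Hpos. rewrite <- S_INR in Hpos.
    apply echain_halve; [lra|now apply H]. }
  apply choice in Happrox as [ms Hms].
  destruct (mcompact_cluster_point d Hmet Hc ms) as [m Hm].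
  exists m. split; intros e He.
  all: destruct (inv_succ_small (e / 4)) as [N HN]; [lra|].
  all: destruct (Hm (e / 2) ltac:(lra) N) as [n [Hn Hd]].
  all: specialize (HN n Hn); pose proof (RinvN_pos n) as Hpos; rewrite <- S_INR in Hpos.
  all: destruct (Hms n) as [Hleft Hright]; set (en := / INR (S n)) in *.
  - rewrite (dist_sym d Hmet) in Hd.
    apply echain_le with e ((L + en) / 2 + d (ms n) m); [lra|lra|].
    apply echain_trans with (ms n); [|apply echain_step; lra].
    apply echain_le with en ((L + en) / 2); auto; lra.
  - apply echain_le with e (d m (ms n) + ((L + en) / 2 + en)); [lra|lra|].
    apply echain_trans with (ms n); [apply echain_step; lra|].
    apply echain_le with en ((L + en) / 2 + en); auto; lra.
Qed.

End Chains.

Lemma grid_approx N : forall x, 0 <= x <= INR N -> exists k, (k <= N)%nat /\ Rabs (x - INR k) <= 1.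
Proof.
  induction N as [|N IH]; intros x Hx.
  - exists 0%nat. split; [lia|]. simpl in *. rewrite Rabs_right; lra.
  - rewrite S_INR in Hx. destruct (Rle_dec x (INR N)) as [Hle|Hgt].
    + destruct (IH x) as [k [Hk Hxk]]; [lra|]. exists k. split; [lia|exact Hxk].
    + exists N. split; [lia|]. rewrite Rabs_right; lra.
Qed.

Lemma dyadic_grid_approx t n : 0 <= t <= 1 ->
  exists k, (k <= 2 ^ n)%nat /\ Rabs (t * 2 ^ n - INR k) <= 1.
Proof.
  intros Ht. apply grid_approx. rewrite INR_pow2. pose proof (pow_lt 2 n). nra.
Qed.

Section Curves.
Context {X : Type} (d : X -> X -> R) (Hmet : is_metric X d).

Lemma partition_range a b t n : Defs.partition a b t n -> forall i, (i <= n)%nat -> a <= t i <= b.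
Proof.
  intros [H0 [Hn Hmono]].
  assert (Hup : forall i, (i <= n)%nat -> t 0%nat <= t i).
  { induction i as [|i IH]; intros Hi; [lra|].
    pose proof (Hmono i ltac:(lia)). pose proof (IH ltac:(lia)). lra. }
  assert (Hdown : forall m i, (i + m = n)%nat -> t i <= t n).
  { induction m as [|m IH]; intros i Hi; [replace i with n by lia; lra|].
    pose proof (Hmono i ltac:(lia)). pose proof (IH (S i) ltac:(lia)). lra. }
  intros i Hi. rewrite <- H0, <- Hn. split; [now apply Hup|]. apply (Hdown (n - i)%nat). lia.
Qed.

Lemma dist_le_curve_length a b g : a <= b -> Rbar_le (d (g a) (g b)) (curve_length X d a b g).
Proof.
  intros Hab. apply (Lub_Rbar_correct _).
  exists (fun i => match i with O => a | _ => b end), 1%nat. simpl.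
  repeat split; [|lra]. intros i Hi. destruct i; [lra|lia].
Qed.

Lemma lipschitz_curve a b K g : a <= b -> 0 <= K ->
  (forall s t, a <= s <= b -> a <= t <= b -> d (g s) (g t) <= K * Rabs (t - s)) ->
  curve_continuous X d a b g /\ exists l, curve_length X d a b g = Finite l /\ l <= K * (b - a).
Proof.
  intros Hab HK Hlip. split.
  - intros t Ht e He. exists (e / (K + 1)). split; [apply Rdiv_lt_0_compat; lra|].
    intros s Hs Hst. specialize (Hlip t s Ht Hs).
    assert (K * Rabs (s - t) <= K * (e / (K + 1))) by (apply Rmult_le_compat_l; lra).
    assert (K * (e / (K + 1)) < e).
    { apply Rmult_lt_reg_r with (K + 1); [lra|]. field_simplify; nra. }
    lra.
  - assert (Hsum : forall t n, Defs.partition a b t n -> psum X d g t n <= K * (b - a)).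
    { intros t n Hp. pose proof (partition_range a b t n Hp) as Hr. destruct Hp as [H0 [Hn Hmono]].
      assert (Hm : forall m, (m <= n)%nat -> psum X d g t m <= K * (t m - t 0%nat)).
      { induction m as [|m IH]; intros Hmn; simpl; [lra|].
        pose proof (IH ltac:(lia)). pose proof (Hmono m ltac:(lia)).
        pose proof (Hlip (t m) (t (S m)) (Hr m ltac:(lia)) (Hr (S m) Hmn)) as Hstep.
        rewrite Rabs_right in Hstep by lra. nra. }
      rewrite <- H0, <- Hn. exact (Hm n (Nat.le_refl n)). }
    pose proof (dist_le_curve_length a b g Hab) as Hge.
    assert (Hle : Rbar_le (curve_length X d a b g) (K * (b - a))).
    { apply (Lub_Rbar_correct _). intros x [t [n [Hp ->]]]. exact (Hsum t n Hp). }
    destruct (curve_length X d a b g) as [l| |]; simpl in Hle, Hge; try contradiction.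
    exists l. auto.
Qed.

Lemma dI_le_curve_length p q a b g l : a <= b -> curve_continuous X d a b g ->
  g a = p -> g b = q -> curve_length X d a b g = Finite l ->
  is_finite (dI X d p q) /\ real (dI X d p q) <= l.
Proof.
  intros Hab Hg Ha Hb Hl. unfold dI.
  set (lengths := fun l0 => exists a b (g : R -> X), a <= b /\ curve_continuous X d a b g /\
    g a = p /\ g b = q /\ curve_length X d a b g = Finite l0).
  destruct (Glb_Rbar_correct lengths) as [Hlb Hglb].
  assert (Hle : Rbar_le (Glb_Rbar lengths) l) by (apply Hlb; exists a, b, g; auto).
  assert (Hge : Rbar_le 0 (Glb_Rbar lengths)).
  { apply Hglb. intros x [a' [b' [g' [Ha'b' [_ [_ [_ Hx]]]]]]].
    pose proof (dist_le_curve_length a' b' g' Ha'b') as H. rewrite Hx in H.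
    pose proof (dist_ge0 d Hmet (g' a') (g' b')). simpl in *. lra. }
  destruct (Glb_Rbar lengths) as [G| |]; simpl in *; try contradiction. now split.
Qed.

Section DyadicCurve.
Hypothesis Hc : mcompact X d.
Variables (p q : X) (L : R).
Hypothesis HL : chain_bound d p q L.

Definition halfway (a b : X) (K : R) : X :=
  epsilon (inhabits a) (fun m => chain_bound d a m (K / 2) /\ chain_bound d m b (K / 2)).

Lemma halfway_spec a b K : chain_bound d a b K ->
  chain_bound d a (halfway a b K) (K / 2) /\ chain_bound d (halfway a b K) b (K / 2).
Proof. intros H. unfold halfway. apply epsilon_spec, chain_bound_midpoint; auto. Qed.

(* [dyadic_point n k] is the point of the curve at time [k / 2^n]. *)
Fixpoint dyadic_point (n k : nat) : X :=
  match n with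
  | O => match k with O => p | _ => q end
  | S n' => if Nat.even k then dyadic_point n' (Nat.div2 k)
            else halfway (dyadic_point n' (Nat.div2 k)) (dyadic_point n' (S (Nat.div2 k)))
                   (L / 2 ^ n')
  end.

Lemma dyadic_point_S n k : dyadic_point (S n) k =
  if Nat.even k then dyadic_point n (Nat.div2 k)
  else halfway (dyadic_point n (Nat.div2 k)) (dyadic_point n (S (Nat.div2 k))) (L / 2 ^ n).
Proof. reflexivity. Qed.

Lemma dyadic_point_even n j : dyadic_point (S n) (2 * j) = dyadic_point n j.
Proof. now rewrite dyadic_point_S, Nat.even_even, Nat.div2_double. Qed.

Lemma dyadic_point_odd n j : dyadic_point (S n) (2 * j + 1) =
  halfway (dyadic_point n j) (dyadic_point n (S j)) (L / 2 ^ n).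
Proof. now rewrite dyadic_point_S, Nat.even_odd, Nat.add_1_r, Nat.div2_succ_double. Qed.

Lemma dyadic_point_0 n : dyadic_point n 0 = p.
Proof.
  induction n as [|n IH]; [reflexivity|]. now rewrite <- (Nat.mul_0_r 2), dyadic_point_even.
Qed.

Lemma dyadic_point_top n : dyadic_point n (2 ^ n) = q.
Proof. induction n as [|n IH]; [reflexivity|]. now rewrite Nat.pow_succ_r', dyadic_point_even. Qed.

Lemma dyadic_point_refine j : forall n k, dyadic_point (n + j) (k * 2 ^ j) = dyadic_point n k.
Proof.
  induction j as [|j IH]; intros n k; [now rewrite Nat.add_0_r, Nat.mul_1_r|].
  replace (k * 2 ^ S j)%nat with (2 * (k * 2 ^ j))%nat by (rewrite Nat.pow_succ_r'; ring).
  now rewrite Nat.add_succ_r, dyadic_point_even.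
Qed.

Lemma dyadic_point_step n : forall k, (k < 2 ^ n)%nat ->
  chain_bound d (dyadic_point n k) (dyadic_point n (S k)) (L / 2 ^ n).
Proof.
  induction n as [|n IH]; intros k Hk.
  - simpl in Hk. replace k with 0%nat by lia. simpl. now rewrite Rdiv_1_r.
  - rewrite Nat.pow_succ_r' in Hk.
    replace (L / 2 ^ S n) with (L / 2 ^ n / 2) by (simpl; field; apply pow_nonzero; lra).
    destruct (Nat.Even_or_Odd k) as [[j ->]|[j ->]].
    + replace (S (2 * j)) with (2 * j + 1)%nat by lia.
      rewrite dyadic_point_even, dyadic_point_odd.
      apply halfway_spec, IH. lia.
    + replace (S (2 * j + 1)) with (2 * S j)%nat by lia.
      rewrite dyadic_point_odd, dyadic_point_even.
      apply halfway_spec, IH. lia.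
Qed.

Let L_ge0 : 0 <= L := chain_bound_ge0 d Hmet p q L HL.

Lemma dyadic_point_dist_add n m : forall i, (i + m <= 2 ^ n)%nat ->
  d (dyadic_point n i) (dyadic_point n (i + m)) <= INR m * (L / 2 ^ n).
Proof.
  induction m as [|m IH]; intros i Hi.
  - rewrite Nat.add_0_r, (dist_xx d Hmet). simpl. lra.
  - pose proof (IH i ltac:(lia)).
    pose proof (dist_le_chain_bound d Hmet _ _ _ (dyadic_point_step n (i + m) ltac:(lia))).
    pose proof (dist_triangle d Hmet (dyadic_point n i) (dyadic_point n (i + m))
      (dyadic_point n (S (i + m)))).
    rewrite Nat.add_succ_r, S_INR. lra.
Qed.

Lemma dyadic_point_dist n i j : (i <= 2 ^ n)%nat -> (j <= 2 ^ n)%nat ->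
  d (dyadic_point n i) (dyadic_point n j) <= Rabs (INR j - INR i) * (L / 2 ^ n).
Proof.
  intros Hi Hj. destruct (Nat.le_ge_cases i j) as [Hij|Hji].
  - pose proof (dyadic_point_dist_add n (j - i) i ltac:(lia)) as H.
    rewrite Nat.add_comm, Nat.sub_add, minus_INR in H by lia.
    rewrite Rabs_right; [exact H|]. apply le_INR in Hij. lra.
  - pose proof (dyadic_point_dist_add n (i - j) j ltac:(lia)) as H.
    rewrite Nat.add_comm, Nat.sub_add, minus_INR in H by lia.
    rewrite (dist_sym d Hmet), Rabs_minus_sym, Rabs_right; [exact H|]. apply le_INR in Hji. lra.
Qed.

Lemma dyadic_point_dist_levels t n m k k' : (n <= m)%nat ->
  (k <= 2 ^ n)%nat -> (k' <= 2 ^ m)%nat ->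
  Rabs (t * 2 ^ n - INR k) <= 1 -> Rabs (t * 2 ^ m - INR k') <= 1 ->
  d (dyadic_point n k) (dyadic_point m k') <= 2 * L / 2 ^ n.
Proof.
  intros Hnm Hk Hk' Htk Htk'.
  replace m with (n + (m - n))%nat in * by lia. set (j := (m - n)%nat) in *.
  rewrite <- (dyadic_point_refine j n k).
  assert (Hkj : (k * 2 ^ j <= 2 ^ (n + j))%nat)
    by (rewrite Nat.pow_add_r; now apply Nat.mul_le_mono_r).
  pose proof (dyadic_point_dist (n + j) _ _ Hkj Hk') as Hd.
  rewrite mult_INR, INR_pow2, pow_add in Hd. rewrite pow_add in Htk'.
  pose proof (pow_lt 2 n ltac:(lra)) as Hn. pose proof (pow_R1_Rle 2 j ltac:(lra)) as Hj.
  pose proof L_ge0.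
  assert (Hgap : Rabs (INR k' - INR k * 2 ^ j) <= 1 + 2 ^ j).
  { replace (INR k' - INR k * 2 ^ j)
      with (- (t * (2 ^ n * 2 ^ j) - INR k') + (t * 2 ^ n - INR k) * 2 ^ j) by ring.
    eapply Rle_trans; [apply Rabs_triang|].
    rewrite Rabs_Ropp, Rabs_mult, (Rabs_right (2 ^ j)) by lra. nra. }
  eapply Rle_trans; [exact Hd|].
  eapply Rle_trans; [apply Rmult_le_compat_r; [apply Rdiv_le_0_compat; nra|exact Hgap]|].
  replace ((1 + 2 ^ j) * (L / (2 ^ n * 2 ^ j))) with (L / 2 ^ n * / 2 ^ j + L / 2 ^ n)
    by (field; lra).
  replace (2 * L / 2 ^ n) with (L / 2 ^ n * 1 + L / 2 ^ n) by (field; lra).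
  apply Rplus_le_compat_r, Rmult_le_compat_l; [apply Rdiv_le_0_compat; lra|].
  rewrite <- Rinv_1. apply Rinv_le_contravar; lra.
Qed.

Definition dyadic_limit (t : R) (z : X) : Prop :=
  forall n k, (k <= 2 ^ n)%nat -> Rabs (t * 2 ^ n - INR k) <= 1 ->
    d z (dyadic_point n k) <= 2 * L / 2 ^ n.

Definition dyadic_curve (t : R) : X := epsilon (inhabits p) (dyadic_limit t).

Lemma dyadic_curve_spec t : 0 <= t <= 1 -> dyadic_limit t (dyadic_curve t).
Proof.
  intros Ht. unfold dyadic_curve. apply epsilon_spec.
  destruct (choice _ (fun n => dyadic_grid_approx t n Ht)) as [ks Hks].
  destruct (mcompact_cluster_point d Hmet Hc (fun m => dyadic_point m (ks m))) as [z Hz].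
  exists z. intros n k Hk Htk. apply Rle_plus_epsilon. intros e He.
  destruct (Hz e He n) as [m [Hnm Hd]]. destruct (Hks m) as [Hkm Htkm].
  pose proof (dyadic_point_dist_levels t n m k (ks m) Hnm Hk Hkm Htk Htkm) as Hnear.
  pose proof (dist_triangle d Hmet z (dyadic_point m (ks m)) (dyadic_point n k)).
  rewrite (dist_sym d Hmet (dyadic_point n k)) in Hnear. lra.
Qed.

Lemma dyadic_curve_lipschitz s t : 0 <= s <= 1 -> 0 <= t <= 1 ->
  d (dyadic_curve s) (dyadic_curve t) <= L * Rabs (t - s).
Proof.
  intros Hs Ht. pose proof L_ge0. apply le_of_le_add_pow2 with (6 * L); [lra|]. intros n.
  destruct (dyadic_grid_approx s n Hs) as [i [Hi Hsi]].
  destruct (dyadic_grid_approx t n Ht) as [j [Hj Htj]].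
  pose proof (dyadic_curve_spec s Hs n i Hi Hsi) as Hsi'.
  pose proof (dyadic_curve_spec t Ht n j Hj Htj) as Htj'.
  pose proof (dyadic_point_dist n i j Hi Hj) as Hij.
  pose proof (dist_triangle d Hmet (dyadic_curve s) (dyadic_point n i) (dyadic_curve t)).
  pose proof (dist_triangle d Hmet (dyadic_point n i) (dyadic_point n j) (dyadic_curve t)).
  rewrite (dist_sym d Hmet (dyadic_curve t)) in Htj'.
  pose proof (pow_lt 2 n ltac:(lra)) as Hn.
  assert (Hgap : Rabs (INR j - INR i) <= Rabs (t - s) * 2 ^ n + 2).
  { replace (INR j - INR i)
      with (- (t * 2 ^ n - INR j) + (s * 2 ^ n - INR i) + (t - s) * 2 ^ n) by ring.
    eapply Rle_trans; [apply Rabs_triang|].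
    eapply Rle_trans; [apply Rplus_le_compat_r, Rabs_triang|].
    rewrite Rabs_Ropp, Rabs_mult, (Rabs_right (2 ^ n)) by lra. lra. }
  assert (Rabs (INR j - INR i) * (L / 2 ^ n) <= (Rabs (t - s) * 2 ^ n + 2) * (L / 2 ^ n))
    by (apply Rmult_le_compat_r; [apply Rdiv_le_0_compat|]; lra).
  replace ((Rabs (t - s) * 2 ^ n + 2) * (L / 2 ^ n)) with (L * Rabs (t - s) + 2 * L / 2 ^ n)
    in * by (field; lra).
  replace (6 * L / 2 ^ n) with (3 * (2 * L / 2 ^ n)) by (field; lra).
  lra.
Qed.

Lemma dyadic_curve_eq t z (ks : nat -> nat) : 0 <= t <= 1 ->
  (forall n, (ks n <= 2 ^ n)%nat /\ Rabs (t * 2 ^ n - INR (ks n)) <= 1 /\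
     dyadic_point n (ks n) = z) ->
  dyadic_curve t = z.
Proof.
  intros Ht H. apply (dist_eq0 d Hmet). apply Rle_antisym; [|apply (dist_ge0 d Hmet)].
  apply le_of_le_add_pow2 with (2 * L); [pose proof L_ge0; lra|]. intros n.
  destruct (H n) as [Hk [Htk Hz]]. pose proof (dyadic_curve_spec t Ht n _ Hk Htk) as Hd.
  rewrite Hz in Hd. unfold Rdiv in *. lra.
Qed.

Lemma dyadic_curve_0 : dyadic_curve 0 = p.
Proof.
  apply dyadic_curve_eq with (fun _ => 0%nat); [lra|]. intros n.
  repeat split; [lia| |apply dyadic_point_0].
  simpl. rewrite Rmult_0_l, Rminus_0_r, Rabs_R0. lra.
Qed.

Lemma dyadic_curve_1 : dyadic_curve 1 = q.
Proof.
  apply dyadic_curve_eq with (fun n => 2 ^ n)%nat; [lra|]. intros n.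
  repeat split; [lia| |apply dyadic_point_top].
  rewrite INR_pow2, Rmult_1_l, Rminus_diag, Rabs_R0. lra.
Qed.

Lemma dI_le_chain_bound : is_finite (dI X d p q) /\ real (dI X d p q) <= L.
Proof.
  destruct (lipschitz_curve 0 1 L dyadic_curve) as [Hcont [l [Hl Hle]]]; [lra|apply L_ge0| |].
  { intros s t Hs Ht. now apply dyadic_curve_lipschitz. }
  destruct (dI_le_curve_length p q 0 1 dyadic_curve l) as [Hfin Hdl];
    auto using dyadic_curve_0, dyadic_curve_1; [lra|].
  split; [exact Hfin|lra].
Qed.

End DyadicCurve.
End Curves.

Section CurvesToChains.
Context {X : Type} (d : X -> X -> R) (Hmet : is_metric X d).

Definition fine_partition_upto (g : R -> X) (e a s : R) : Prop :=
  exists t n, t 0%nat = a /\ t n = s /\ (forall i, (i < n)%nat -> t i <= t (S i)) /\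
    (forall i, (i < n)%nat -> d (g (t i)) (g (t (S i))) < e).

Lemma fine_partition_upto_extend g e a s s' : fine_partition_upto g e a s -> s <= s' ->
  d (g s) (g s') < e -> fine_partition_upto g e a s'.
Proof.
  intros [t [n [H0 [Hn [Hmono Hfine]]]]] Hss' Hg.
  exists (fun i => if Nat.leb i n then t i else s'), (S n).
  split; [exact H0|]. split; [destruct (Nat.leb_spec (S n) n); [lia|reflexivity]|].
  split; intros i Hi; destruct (Nat.leb_spec i n), (Nat.leb_spec (S i) n); try lia.
  - apply Hmono. lia.
  - replace i with n by lia. lra.
  - apply Hfine. lia.
  - replace i with n by lia. now rewrite Hn.
Qed.

Lemma curve_fine_partition a b g e : a <= b -> curve_continuous X d a b g -> 0 < e ->
  exists t n, Defs.partition a b t n /\ forall i, (i < n)%nat -> d (g (t i)) (g (t (S i))) < e.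
Proof.
  intros Hab Hg He.
  set (reached := fun s => a <= s <= b /\ fine_partition_upto g e a s).
  assert (Ha : reached a).
  { split; [lra|]. exists (fun _ => a), 0%nat. repeat split; intros; lia. }
  destruct (completeness reached) as [sig [Hub Hlub]];
    [exists b; intros x [Hx _]; lra|now exists a|].
  assert (Hsig : a <= sig <= b) by (split; [now apply Hub|apply Hlub; intros x [Hx _]; lra]).
  destruct (Hg sig Hsig (e / 2)) as [delta [Hdelta Hnear]]; [lra|].
  assert (Hs : exists s, reached s /\ sig - delta < s).
  { apply NNPP. intros Hn. assert (sig <= sig - delta); [|lra].
    apply Hlub. intros x Hx. apply Rnot_lt_le. intros Hlt. apply Hn. eauto. }
  destruct Hs as [s [[Hs Hfs] Hs']].
  assert (Hssig : s <= sig) by (apply Hub; split; auto).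
  set (s' := Rmin (sig + delta / 2) b).
  assert (Hs'sig : sig <= s' <= sig + delta / 2) by (unfold s', Rmin; destruct Rle_dec; lra).
  assert (Hds : d (g sig) (g s) < e / 2) by (apply Hnear; [lra|rewrite Rabs_left1; lra]).
  assert (Hds' : d (g sig) (g s') < e / 2)
    by (apply Hnear; [unfold s', Rmin; destruct Rle_dec; lra|rewrite Rabs_right; lra]).
  assert (Hreached : reached s').
  { split; [unfold s', Rmin; destruct Rle_dec; lra|].
    apply fine_partition_upto_extend with s; [exact Hfs|lra|].
    pose proof (dist_triangle d Hmet (g s) (g sig) (g s')) as Htri.
    rewrite (dist_sym d Hmet (g s) (g sig)) in Htri. lra. }
  assert (Hb : s' = b).
  { pose proof (Hub s' Hreached). unfold s', Rmin in *. destruct Rle_dec; lra. }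
  destruct Hreached as [_ [t [n [H0 [Hn [Hmono Hfine]]]]]].
  exists t, n. repeat split; auto. congruence.
Qed.

Lemma chain_bound_of_curve a b g l : a <= b -> curve_continuous X d a b g ->
  curve_length X d a b g = Finite l -> chain_bound d (g a) (g b) l.
Proof.
  intros Hab Hg Hl e He.
  destruct (curve_fine_partition a b g e Hab Hg He) as [t [n [Hp Hfine]]].
  assert (Hsum : psum X d g t n <= l).
  { assert (H : Rbar_le (psum X d g t n) (curve_length X d a b g))
      by (apply (Lub_Rbar_correct _); eauto).
    now rewrite Hl in H. }
  assert (Hchain : forall m, (m <= n)%nat -> exists c, chain_fine d e (g (t 0%nat)) c /\
    chain_end (g (t 0%nat)) c = g (t m) /\ chain_len d (g (t 0%nat)) c = psum X d g t m).
  { induction m as [|m IH]; intros Hm; [exists nil; simpl; auto|].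
    destruct (IH ltac:(lia)) as [c [Hc [Hend Hlen]]].
    exists (c ++ g (t (S m)) :: nil).
    rewrite chain_fine_app, chain_end_app, chain_len_app, Hend, Hlen. simpl.
    repeat split; auto. lra. }
  destruct Hp as [H0 [Hn _]]. destruct (Hchain n (Nat.le_refl n)) as [c [Hc [Hend Hlen]]].
  rewrite H0 in Hc, Hend, Hlen. rewrite Hn in Hend. exists c. repeat split; auto. lra.
Qed.

Lemma chain_bound_near_dI p q eta : is_finite (dI X d p q) -> 0 < eta ->
  exists L, chain_bound d p q L /\ L <= real (dI X d p q) + eta.
Proof.
  intros Hfin Heta. unfold dI in *.
  set (lengths := fun l0 => exists a b (g : R -> X), a <= b /\ curve_continuous X d a b g /\
    g a = p /\ g b = q /\ curve_length X d a b g = Finite l0) in *.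
  destruct (Glb_Rbar_correct lengths) as [_ Hglb].
  destruct (Glb_Rbar lengths) as [G| |]; try discriminate. simpl.
  destruct (classic (exists l, lengths l /\ l < G + eta))
    as [[l [[a [b [g [Hab [Hg [<- [<- Hl]]]]]]] HlG]]|Hno].
  - exists l. split; [now apply chain_bound_of_curve|lra].
  - assert (H : Rbar_le (G + eta) G).
    { apply Hglb. intros x Hx. apply Rnot_lt_le. intros Hlt. apply Hno. eauto. }
    simpl in H. lra.
Qed.

End CurvesToChains.

Section E10.
Context {X : Type} (d : X -> X -> R) (Hmet : is_metric X d).

Lemma local_slope_descent (A : X -> Prop) u z c r :
  local_slope X d A u z = Finite 1 -> 0 <= c < 1 -> 0 < r ->
  exists w, A w /\ 0 < d z w < r /\ c * d z w < u z - u w.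
Proof.
  intros Hs Hc Hr. unfold local_slope in Hs.
  destruct excluded_middle_informative as [_|_]; [injection Hs; lra|].
  set (slopes := fun v : Rbar => exists r0, 0 < r0 /\ v = slope_sup X d A u z r0) in Hs.
  assert (H1 : Rbar_le 1 (slope_sup X d A u z r)).
  { destruct (proj2_sig (Rbar_ex_glb slopes)) as [Hlb _].
    unfold Rbar_glb in Hs. rewrite Hs in Hlb. apply Hlb. now exists r. }
  unfold slope_sup in H1.
  set (quotients := fun v => exists x, A x /\ 0 < d z x < r /\ v = Rmax (u z - u x) 0 / d z x)
    in H1.
  destruct (classic (exists v, quotients v /\ c < v)) as [[v [[w [Hw [Hzw ->]]] Hv]]|Hno].
  - exists w. repeat split; auto; try lra.
    unfold Rmax in Hv. destruct Rle_dec; [unfold Rdiv in Hv; lra|].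
    apply Rmult_lt_compat_r with (r := d z w) in Hv; [|lra].
    unfold Rdiv in Hv. now rewrite Rmult_assoc, Rinv_l, Rmult_1_r in Hv by lra.
  - assert (Hle : Rbar_le (Lub_Rbar quotients) c).
    { apply (Lub_Rbar_correct quotients). intros x Hx. apply Rnot_lt_le. eauto. }
    destruct (Lub_Rbar quotients); simpl in *; try contradiction. lra.
Qed.

Section WithE10.
Hypotheses (Hc : mcompact X d) (HE : E10_property X d).

(* Were [x0] isolated, [{x0}] would be open, and the function given by the E10 property
   could not have slope 1 at [x0]. *)
Lemma E10_not_isolated x0 q : q <> x0 -> forall r, 0 < r -> exists y, 0 < d x0 y < r.
Proof.
  intros Hq r Hr. apply NNPP. intros Hiso.
  destruct (HE (fun z => z = x0)) as [u [_ [Hslope _]]]; [|now exists x0|now exists q|].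
  - intros z ->. exists r. split; [exact Hr|]. intros y Hy. symmetry. apply (dist_eq0 d Hmet).
    apply Rle_antisym; [|apply (dist_ge0 d Hmet)].
    apply Rnot_lt_le. intros Hpos. apply Hiso. eauto.
  - destruct (local_slope_descent _ u x0 0 r (Hslope x0 eq_refl)) as [w [_ [Hw _]]];
      [lra|exact Hr|].
    apply Hiso. eauto.
Qed.

Section Descent.
Variables (x0 : X) (u : X -> R).
Hypotheses (Hu : mcontinuous d u) (Hu0 : u x0 = 0)
  (Hstep : forall z, z <> x0 -> forall r, 0 < r ->
     exists w, 0 < d z w < r /\ 3 / 4 * d z w < u z - u w).

(* Take [z] minimising [u] on the closure of the counterexamples: if [z = x0], a
   counterexample close to [x0] is linked to it in one step; otherwise a descent step
   from [z] reaches a point [w] with [u w < u z], which is no counterexample and which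
   every counterexample close enough to [z] reaches in one step. *)
Lemma descent_echain e : 0 < e -> forall z, echain d e z x0 (2 * u z + e).
Proof.
  intros He z0. apply NNPP. intros Hz0.
  set (bad := fun z => ~ echain d e z x0 (2 * u z + e)).
  destruct (mcompact_argmin_closure d Hmet Hc u bad Hu) as [z [Hcl Hmin]]; [now exists z0|].
  destruct (classic (z = x0)) as [->|Hzx].
  - destruct (Hcl e He) as [b [Hb Hdb]]. apply Hb.
    pose proof (Hmin b Hb). rewrite (dist_sym d Hmet) in Hdb.
    apply echain_le with e (d b x0); [lra|lra|].
    now apply echain_step.
  - destruct (Hstep z Hzx (e / 2)) as [w [Hzw Hdescent]]; [lra|].
    assert (Hw : echain d e w x0 (2 * u w + e)).
    { apply NNPP. intros Hn. pose proof (Hmin w Hn). lra. }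
    destruct (Hcl (d z w / 2)) as [b [Hb Hdb]]; [lra|].
    apply Hb. pose proof (Hmin b Hb).
    pose proof (dist_triangle d Hmet b z w). rewrite (dist_sym d Hmet b z) in *.
    apply echain_le with e (d b w + (2 * u w + e)); [lra|lra|].
    apply echain_trans with w; [apply echain_step; lra|exact Hw].
Qed.

Lemma descent_chain_bound z : chain_bound d z x0 (2 * u z).
Proof. intros e He. now apply descent_echain. Qed.

End Descent.

Lemma E10_descent_function x0 :
  exists u, mcontinuous d u /\ u x0 = 0 /\ forall z, chain_bound d z x0 (2 * u z).
Proof.
  destruct (classic (exists q, q <> x0)) as [[q Hq]|Hsingle].
  - pose proof (E10_not_isolated x0 q Hq) as Hni.
    destruct (HE (fun z => z <> x0)) as [u [Hcont [Hslope Hbd]]]; [| |now exists x0|].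
    + intros z Hz. exists (d z x0).
      assert (Hpos : 0 < d z x0).
      { destruct (dist_ge0 d Hmet z x0) as [Hlt|Heq]; [exact Hlt|].
        exfalso. now apply Hz, (dist_eq0 d Hmet). }
      split; [exact Hpos|]. intros y Hy ->. lra.
    + now exists q.
    + assert (Hdense : forall z, closure X d (fun z => z <> x0) z).
      { intros z r Hr. destruct (classic (z = x0)) as [->|Hz].
        - destruct (Hni r Hr) as [y [Hy Hyr]]. exists y. split; [|exact Hyr].
          intros ->. rewrite (dist_xx d Hmet) in Hy. lra.
        - exists z. rewrite (dist_xx d Hmet). auto. }
      assert (Hu : mcontinuous d u).
      { intros x e He. destruct (Hcont x (Hdense x) e He) as [delta [Hdelta Hnear]].
        exists delta. split; auto. }
      assert (Hu0 : u x0 = 0).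
      { apply Hbd. split; [apply Hdense|]. intros [r [Hr Hball]].
        apply (Hball x0); [rewrite (dist_xx d Hmet)|]; auto. }
      exists u. repeat split; auto. intros z. apply descent_chain_bound; auto.
      intros y Hy r Hr.
      destruct (local_slope_descent _ u y (3 / 4) r (Hslope y Hy)) as [w [_ Hw]]; [lra|exact Hr|].
      eauto.
  - exists (fun _ => 0). repeat split.
    + intros x e He. exists 1. split; [lra|]. intros y _. rewrite Rminus_diag, Rabs_R0. exact He.
    + intros z. replace z with x0 by (apply NNPP; eauto). rewrite Rmult_0_r. apply chain_bound_refl.
Qed.

Lemma E10_chain_bound_small x0 eps : 0 < eps ->
  exists delta, 0 < delta /\ forall x, d x0 x < delta -> chain_bound d x0 x eps.
Proof.
  intros Heps. destruct (E10_descent_function x0) as [u [Hu [Hu0 Hchain]]].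
  destruct (Hu x0 (eps / 2)) as [delta [Hdelta Hnear]]; [lra|].
  exists delta. split; [exact Hdelta|]. intros x Hx.
  apply (chain_bound_sym d Hmet), chain_bound_le with (2 * u x); [|apply Hchain].
  specialize (Hnear x Hx). rewrite Hu0 in Hnear. apply Rabs_def2 in Hnear. lra.
Qed.

End WithE10.
End E10.

Lemma dI_le_perturb {X : Type} (d : X -> X -> R) (Hmet : is_metric X d) (Hc : mcompact X d)
  x y x' y' a b : is_finite (dI X d x y) -> chain_bound d x x' a -> chain_bound d y y' b ->
  real (dI X d x' y') <= real (dI X d x y) + a + b.
Proof.
  intros Hfin Hx Hy. apply Rle_plus_epsilon. intros eta Heta.
  destruct (chain_bound_near_dI d Hmet x y eta Hfin Heta) as [L [HL HLe]].
  assert (H : chain_bound d x' y' (a + L + b)).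
  { apply (chain_bound_trans d) with y; [|exact Hy].
    apply (chain_bound_trans d) with x; [now apply (chain_bound_sym d Hmet)|exact HL]. }
  pose proof (proj2 (dI_le_chain_bound d Hmet Hc x' y' _ H)). lra.
Qed.

Theorem proposition5p2 (X : Type) (d : X -> X -> R)
  (Hmet : is_metric X d) (Hcpt : mcompact X d) (HE : E10_property X d) :
  (forall x y, is_finite (dI X d x y)) /\
  (forall x y eps, 0 < eps -> exists delta, 0 < delta /\
     forall x' y', d x x' < delta -> d y y' < delta ->
       Rabs (real (dI X d x' y') - real (dI X d x y)) < eps).
Proof.
  assert (Hfin : forall x y, is_finite (dI X d x y)).
  { intros x y. destruct (E10_descent_function d Hmet Hcpt HE y) as [u [_ [_ Hu]]].
    exact (proj1 (dI_le_chain_bound d Hmet Hcpt x y _ (Hu x))). }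
  split; [exact Hfin|]. intros x y eps Heps.
  destruct (E10_chain_bound_small d Hmet Hcpt HE x (eps / 3)) as [dx [Hdx Hx]]; [lra|].
  destruct (E10_chain_bound_small d Hmet Hcpt HE y (eps / 3)) as [dy [Hdy Hy]]; [lra|].
  exists (Rmin dx dy). split; [now apply Rmin_pos|]. intros x' y' Hxx' Hyy'.
  assert (Cx : chain_bound d x x' (eps / 3))
    by (apply Hx; eapply Rlt_le_trans; [exact Hxx'|apply Rmin_l]).
  assert (Cy : chain_bound d y y' (eps / 3))
    by (apply Hy; eapply Rlt_le_trans; [exact Hyy'|apply Rmin_r]).
  pose proof (dI_le_perturb d Hmet Hcpt x y x' y' _ _ (Hfin x y) Cx Cy).
  pose proof (dI_le_perturb d Hmet Hcpt x' y' x y _ _ (Hfin x' y')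
    (chain_bound_sym d Hmet _ _ _ Cx) (chain_bound_sym d Hmet _ _ _ Cy)).
  apply Rabs_def1; lra.
Qed.
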